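(* Let $\alpha,\beta,\gamma\in\mathbb{R}$, $c,a\in\mathbb{R}$ with $ca>\max\{\gamma,0\}$, and $r>0$. Let $g(x,y)=c^2a^2-ca\gamma+ca\alpha x^2+3ca\beta y^2-\alpha^2x^2y^2$, $C=\{(x,y)\in\mathbb{R}^2:g(x,y)>0\}$, and $R=\{(x,y):x^2+y^2\le r^2\}$. Then $R\subseteq C$ in each of the following four cases: (1) $\alpha=0$ and $3\beta r^2>\gamma-ca$; (2) $\alpha\neq0$, $\alpha>3\beta$, $r^2\le\frac{ca\alpha-3ca\beta}{\alpha^2}$, and $3\beta r^2>\gamma-ca$; (3) $\alpha\neq0$, $\alpha<3\beta$, $r^2\le\frac{3ca\beta-ca\alpha}{\alpha^2}$, and $\alpha r^2>\gamma-ca$; (4) $3ca\alpha\beta+\alpha^2(ca-\gamma)>0$, $r^2\ge\max\Big\{\frac{ca\alpha-3ca\beta}{\alpha^2},\frac{3ca\beta-ca\alpha}{\alpha^2}\Big\}$, and $$\frac{ca\alpha+3ca\beta-2\sqrt{3c^2a^2\alpha\beta+\alpha^2ca(ca-\gamma)}}{\alpha^2}<r^2<\frac{ca\alpha+3ca\beta+2\sqrt{3c^2a^2\alpha\beta+\alpha^2ca(ca-\gamma)}}{\alpha^2}.$$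
   Context: The set $C$ is the contraction region (for $\omega^2=1$, identical couplings $a_j=b_j=a$) of the virtual system of the all-to-all coupled Rayleigh van der Pol network. *)

From Stdlib Require Import Reals.
Open Scope R_scope.

Definition g_fun (alpha beta gamma c a : R) (x y : R) : R :=
  c^2 * a^2 - c*a*gamma + c*a*alpha*x^2 + 3*c*a*beta*y^2 - alpha^2*x^2*y^2.

Definition C_set (alpha beta gamma c a : R) (p : R * R) : Prop :=
  g_fun alpha beta gamma c a (fst p) (snd p) > 0.

Definition R_disc (r : R) (p : R * R) : Prop :=
  (fst p)^2 + (snd p)^2 <= r^2.

(* Write u = x^2, v = y^2.  Then g is the bilinear form
   K + A u + B v - alpha^2 u v  with  K = ca(ca - gamma) > 0,
   and the disc becomes the triangle u, v >= 0, u + v <= r^2.  A bilinear form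
   is affine along every horizontal and vertical segment, so it is positive on
   the triangle as soon as it is positive at the origin and on the hypotenuse
   u + v = r^2.  On the hypotenuse it is a quadratic in u, and the four cases
   are four elementary reasons for such a quadratic to stay positive: it is
   affine (1), monotone from either endpoint (2, 3), or has negative
   discriminant (4). *)
From Stdlib Require Import Reals Lra Psatz.
Open Scope R_scope.

Definition bilin (K A B D u v : R) : R := K + A*u + B*v - D*u*v.

Lemma affine_pos_on_segment (p q w t : R) :
  0 <= t <= w -> p > 0 -> p + q*w > 0 -> p + q*t > 0.
Proof. intros Ht Hp Hw. destruct (Rle_or_lt 0 q); nra. Qed.

Lemma quadratic_pos_of_nonneg_coeffs (p q D t : R) :
  p > 0 -> q >= 0 -> D >= 0 -> t >= 0 -> p + q*t + D*t^2 > 0.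
Proof. intros. nra. Qed.

Lemma quadratic_pos_of_neg_discr (p q D t : R) :
  D > 0 -> q^2 < 4*D*p -> p + q*t + D*t^2 > 0.
Proof.
  intros HD Hdisc.
  assert (Hsq : 4*D*(p + q*t + D*t^2) = (2*D*t + q)^2 + (4*D*p - q^2)) by ring.
  pose proof (pow2_ge_0 (2*D*t + q)).
  destruct (Rle_or_lt (p + q*t + D*t^2) 0); nra.
Qed.

Lemma sqr_lt_of_between (m S d : R) :
  m - S < d < m + S -> (d - m)^2 < S^2.
Proof.
  intros [Hlo Hhi].
  assert (Hfac : (d - m)^2 - S^2 = (d - m - S) * (d - m + S)) by ring.
  assert (Hneg : (d - m - S) * (d - m + S) < 0) by (apply Rmult_neg_pos; lra).
  lra.
Qed.

Lemma sqr_pos_of_neq0 (x : R) : x <> 0 -> x^2 > 0.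
Proof. intros Hx. destruct (Rtotal_order x 0) as [|[|]]; [nra | contradiction | nra]. Qed.

Lemma mul_le_of_le_div (d x y : R) : d > 0 -> x <= y / d -> d * x <= y.
Proof.
  intros Hd Hx. apply Rle_trans with (d * (y / d)); [nra |].
  right; field; lra.
Qed.

Lemma mul_lt_of_lt_div (d x y : R) : d > 0 -> x < y / d -> d * x < y.
Proof.
  intros Hd Hx. apply Rlt_le_trans with (d * (y / d)); [nra |].
  right; field; lra.
Qed.

Lemma lt_mul_of_div_lt (d x y : R) : d > 0 -> x / d < y -> x < d * y.
Proof.
  intros Hd Hx. apply Rle_lt_trans with (d * (x / d)); [right; field; lra | nra].
Qed.

Section Triangle.
Variables K A B D s : R.

Lemma bilin_pos_on_triangle :
  K > 0 -> (forall t, 0 <= t <= s -> bilin K A B D t (s - t) > 0) ->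
  forall u v, 0 <= u -> 0 <= v -> u + v <= s -> bilin K A B D u v > 0.
Proof.
  unfold bilin; intros HK Hedge u v Hu Hv Huv.
  assert (Hleft : K + B*v > 0).
  { apply (affine_pos_on_segment K B s v); [lra | exact HK |].
    pose proof (Hedge 0 ltac:(lra)); lra. }
  pose proof (Hedge (s - v) ltac:(lra)) as Hcorner.
  pose proof (affine_pos_on_segment (K + B*v) (A - D*v) (s - v) u
                ltac:(lra) Hleft ltac:(nra)).
  lra.
Qed.

Lemma bilin_edge_from_left t :
  bilin K A B D t (s - t) = (K + B*s) + (A - B - D*s)*t + D*t^2.
Proof. unfold bilin; ring. Qed.

Lemma bilin_edge_from_right t :
  bilin K A B D t (s - t) = (K + A*s) + (B - A - D*s)*(s - t) + D*(s - t)^2.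
Proof. unfold bilin; ring. Qed.

Lemma bilin_edge_affine t :
  A = 0 -> D = 0 -> 0 <= t <= s -> K > 0 -> K + B*s > 0 ->
  bilin K A B D t (s - t) > 0.
Proof.
  intros -> -> Ht HK HKs. unfold bilin.
  pose proof (affine_pos_on_segment (K + B*s) (- B) s t Ht HKs ltac:(lra)).
  lra.
Qed.

Lemma bilin_edge_increasing t :
  0 <= t -> K + B*s > 0 -> D >= 0 -> D*s <= A - B ->
  bilin K A B D t (s - t) > 0.
Proof.
  intros. rewrite bilin_edge_from_left.
  apply quadratic_pos_of_nonneg_coeffs; lra.
Qed.

Lemma bilin_edge_decreasing t :
  t <= s -> K + A*s > 0 -> D >= 0 -> D*s <= B - A ->
  bilin K A B D t (s - t) > 0.
Proof.
  intros. rewrite bilin_edge_from_right.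
  apply quadratic_pos_of_nonneg_coeffs; lra.
Qed.

Lemma bilin_edge_neg_discr t :
  D > 0 -> (D*s - (A + B))^2 < 4*(A*B + D*K) ->
  bilin K A B D t (s - t) > 0.
Proof.
  intros HD Hdisc. rewrite bilin_edge_from_left.
  apply quadratic_pos_of_neg_discr; [exact HD | nra].
Qed.

End Triangle.

Theorem lemma4p7 (alpha beta gamma c a r : R) :
  c * a > Rmax gamma 0 -> r > 0 ->
  ( (alpha = 0 /\ 3*beta*r^2 > gamma - c*a)
    \/ (alpha <> 0 /\ alpha > 3*beta /\
        r^2 <= (c*a*alpha - 3*c*a*beta) / alpha^2 /\ 3*beta*r^2 > gamma - c*a)
    \/ (alpha <> 0 /\ alpha < 3*beta /\
        r^2 <= (3*c*a*beta - c*a*alpha) / alpha^2 /\ alpha*r^2 > gamma - c*a)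
    \/ (3*c*a*alpha*beta + alpha^2*(c*a - gamma) > 0 /\
        r^2 >= Rmax ((c*a*alpha - 3*c*a*beta) / alpha^2)
                    ((3*c*a*beta - c*a*alpha) / alpha^2) /\
        (c*a*alpha + 3*c*a*beta
           - 2 * sqrt (3*c^2*a^2*alpha*beta + alpha^2*c*a*(c*a - gamma))) / alpha^2 < r^2 /\
        r^2 < (c*a*alpha + 3*c*a*beta
           + 2 * sqrt (3*c^2*a^2*alpha*beta + alpha^2*c*a*(c*a - gamma))) / alpha^2) ) ->
  forall p : R * R, R_disc r p -> C_set alpha beta gamma c a p.
Proof.
  intros Hca Hr Hcases [x y] Hp; unfold R_disc, C_set, g_fun in *; cbn [fst snd] in *.
  assert (Hgamma : c*a > gamma) by (pose proof (Rmax_l gamma 0); lra).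
  assert (Hca0 : c*a > 0) by (pose proof (Rmax_r gamma 0); lra).
  set (s := r^2) in *.
  assert (Hs : s > 0) by (unfold s; nra).
  change (bilin (c^2*a^2 - c*a*gamma) (c*a*alpha) (3*c*a*beta) (alpha^2) (x^2) (y^2) > 0).
  apply (bilin_pos_on_triangle _ _ _ _ s); [nra | | nra | nra | lra].
  intros t Ht.
  (* The sign conditions on alpha - 3 beta in cases 2, 3 and the Rmax bound
     in case 4 follow from the other hypotheses and are not used. *)
  destruct Hcases as [[-> H3]|[[Ha [_ [Hs3 H3]]]|[[Ha [_ [Hs3 H3]]]|[Hq [_ [Hlo Hhi]]]]]].
  - apply bilin_edge_affine; [ring | ring | exact Ht | nra | nra].
  - assert (Ha2 : alpha^2 > 0) by (apply sqr_pos_of_neq0; exact Ha).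
    apply bilin_edge_increasing; [lra | nra | nra |].
    apply mul_le_of_le_div; [exact Ha2 | exact Hs3].
  - assert (Ha2 : alpha^2 > 0) by (apply sqr_pos_of_neq0; exact Ha).
    apply bilin_edge_decreasing; [lra | nra | nra |].
    apply mul_le_of_le_div; [exact Ha2 | exact Hs3].
  - assert (Ha2 : alpha^2 > 0) by (apply sqr_pos_of_neq0; intros ->; lra).
    set (Q := 3*c^2*a^2*alpha*beta + alpha^2*c*a*(c*a - gamma)) in *.
    assert (HQ : 0 <= Q) by (unfold Q; nra).
    pose proof (sqr_lt_of_between (c*a*alpha + 3*c*a*beta) (2 * sqrt Q) (alpha^2 * s)
                  (conj (lt_mul_of_div_lt _ _ _ Ha2 Hlo) (mul_lt_of_lt_div _ _ _ Ha2 Hhi)))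
      as Hsqr.
    apply bilin_edge_neg_discr; [exact Ha2 |].
    replace ((2 * sqrt Q)^2) with (4 * sqrt Q ^ 2) in Hsqr by ring.
    rewrite (pow2_sqrt Q HQ) in Hsqr. unfold Q in Hsqr. nra.
Qed.
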